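(* Consider a quadrotor with unknown mass $m>0$, and the position and attitude tracking errors $e_p(t)\in\mathbb{R}^3$, $e_q(t)\in\mathbb{R}^3$, with $\xi_p=[e_p^T\ \dot e_p^T]^T$, $\xi_q=[e_q^T\ \dot e_q^T]^T$ and sliding variables $$s_p=\dot e_p+\Phi_p e_p,\qquad s_q=\dot e_q+\Phi_q e_q,$$ where $\Phi_p,\Phi_q$ are positive definite gain matrices. Suppose the sliding variables obey $$m\dot s_p=\tau_p+\varphi_p-m g_p,\qquad J(t)\dot s_q=\tau_q-C_q(t)s_q+\varphi_q,$$ where $g_p=[0\ 0\ g]^T$ ($g>0$ the gravitational acceleration), $J(t)\in\mathbb{R}^{3\times 3}$ is a continuously differentiable symmetric matrix with $\underline{j}I\le J(t)\le \overline{j}I$ for some unknown $0<\underline j\le\overline j$, $C_q(t)\in\mathbb{R}^{3\times3}$ satisfies $r^T(\dot J-2C_q)r=0$ for all $r\in\mathbb{R}^3$, and the (unknown) lumped uncertainties satisfy, for all $t$, $$\|\varphi_p\|\le K_{p0}^*+K_{p1}^*\|\xi_p\|,\qquad \|\varphi_q\|\le K_{q0}^*+K_{q1}^*\|\xi_q\|+K_{q2}^*\|\xi_q\|^2$$ for unknown finite constants $K_{pi}^*,K_{qi}^*\ge 0$. Apply the control laws $$\tau_p=-\Lambda_p s_p-\rho_p\,\mathrm{sgn}(s_p)+\hat m\,g_p,\qquad \rho_p=\hat K_{p0}+\hat K_{p1}\|\xi_p\|,$$ $$\tau_q=-\Lambda_q s_q-\rho_q\,\mathrm{sgn}(s_q),\qquad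 \rho_q=\hat K_{q0}+\hat K_{q1}\|\xi_q\|+\hat K_{q2}\|\xi_q\|^2,$$ with positive definite $\Lambda_p,\Lambda_q$, $\mathrm{sgn}(x)=x/\|x\|$, and the adaptive laws $$\dot{\hat K}_{pi}=\|s_p\|\|\xi_p\|^i-\alpha_{pi}\hat K_{pi},\ \hat K_{pi}(0)>0\ (i=0,1),\qquad \dot{\hat m}=-s_p^Tg_p-\alpha_m\hat m,\ \hat m(0)>0,$$ $$\dot{\hat K}_{qi}=\|s_q\|\|\xi_q\|^i-\alpha_{qi}\hat K_{qi},\ \hat K_{qi}(0)>0\ (i=0,1,2),$$ with design scalars $\alpha_{pi},\alpha_m,\alpha_{qi}>0$. Then the closed-loop trajectories are uniformly ultimately bounded: defining $$V=\tfrac12 s_p^Tms_p+\tfrac12\sum_{i=0}^{1}(\hat K_{pi}-K_{pi}^* )^2+\tfrac12(\hat m-m)^2+\tfrac12 s_q^TJs_q+\tfrac12\sum_{i=0}^{2}(\hat K_{qi}-K_{qi}^* )^2,$$ there exists a constant $\bar{\mathcal B}\ge0$, depending only on $m,\overline j$, the constants $K_{pi}^*,K_{qi}^*$ and the design parameters $\Lambda_p,\Lambda_q,\alpha_{pi},\alpha_m,\alpha_{qi}$, such that $V(t)\le\max\{V(0),\bar{\mathcal B}\}$ for all $t\ge0$.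
   Context: This abstracts the outer (position) and inner (attitude) loops of a quadrotor controller: $p=[x\ y\ z]^T$ and $q=[\phi\ \theta\ \psi]^T$ are position and roll/pitch/yaw; $e_p=p-p_d$ for a bounded smooth desired trajectory $p_d$; $e_q$ is the attitude error (obtained from the vee map of $R_d^TR-R^TR_d$), $J$ the inertia matrix and $C_q$ the Coriolis matrix of the attitude dynamics, $\varphi_p,\varphi_q$ lump disturbances and unknown dynamics. $\lambda_{\min}(\cdot)$ denotes minimum eigenvalue. Uniformly ultimately bounded means: there exist $b>0$, $c>0$ such that for every $0<a<c$ there is $T>0$ with $\|x(t_0)\|\le a\Rightarrow\|x(t)\|\le b$ for all $t\ge t_0+T$. *)

From HB Require Import structures.
From mathcomp Require Import all_boot all_order all_algebra.
From mathcomp Require Import all_classical all_reals all_analysis.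
Set Implicit Arguments. Unset Strict Implicit. Unset Printing Implicit Defensive.
Import Order.TTheory GRing.Theory Num.Theory.
Import numFieldNormedType.Exports.
Local Open Scope ring_scope.

(* Euclidean norm of a column vector (the library's matrix norm is the max-norm). *)
Definition enorm {R : realType} {n : nat} (x : 'cV[R]_n) : R :=
  Num.sqrt (\sum_(i < n) x i 0 ^+ 2).

(* sgn(x) = x / ||x||  (with the MathComp convention 0^-1 = 0, sgn 0 = 0). *)
Definition sgnv {R : realType} {n : nat} (x : 'cV[R]_n) : 'cV[R]_n :=
  (enorm x)^-1 *: x.

Definition gvec {R : realType} (g : R) : 'cV[R]_3 :=
  \col_(i < 3) (if i == ord_max then g else 0).

Definition posdef {R : realType} (A : 'M[R]_3) : Prop :=
  A^T = A /\ forall x : 'cV[R]_3, x != 0 -> 0 < (x^T *m A *m x) 0 0.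

Definition slide {R : realType} (Phi : 'M[R]_3) (e : R -> 'cV[R]_3) (t : R)
  : 'cV[R]_3 := derive1 e t + Phi *m e t.

Definition xiv {R : realType} (e : R -> 'cV[R]_3) (t : R) : 'cV[R]_(3 + 3) :=
  col_mx (e t) (derive1 e t).

From HB Require Import structures.
From mathcomp Require Import all_boot all_order all_algebra.
From mathcomp Require Import all_classical all_reals all_analysis.
From mathcomp Require Import ring lra.
Import Order.TTheory GRing.Theory Num.Theory.
Import numFieldNormedType.Exports.
Local Open Scope ring_scope.
Set Implicit Arguments. Unset Strict Implicit. Unset Printing Implicit Defensive.

(* Along closed-loop trajectories the function V (energy of the sliding
   variables plus squared errors of the adaptive estimates) satisfies
   dV/dt <= - c V + d, with a rate c > 0 and a constant d that depend only
   on m, jbar, the uncertainty constants and the design parameters; a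
   comparison argument then gives V t <= max (V 0) (d / c). *)

Section EuclideanGeometry.
Variable R : realType.

Lemma dotE n (x y : 'cV[R]_n) : (x^T *m y) 0 0 = \sum_i x i 0 * y i 0.
Proof. by rewrite mxE; apply: eq_bigr => i _; rewrite mxE. Qed.

Lemma dot_self n (x : 'cV[R]_n) : (x^T *m x) 0 0 = \sum_i x i 0 ^+ 2.
Proof. by rewrite dotE; apply: eq_bigr => i _; rewrite expr2. Qed.

Lemma dot_ge0 n (x : 'cV[R]_n) : 0 <= (x^T *m x) 0 0.
Proof. by rewrite dot_self sumr_ge0 // => i _; apply: sqr_ge0. Qed.

Lemma dotD n (x u v : 'cV[R]_n) :
  (x^T *m (u + v)) 0 0 = (x^T *m u) 0 0 + (x^T *m v) 0 0.
Proof. by rewrite mulmxDr mxE. Qed.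

Lemma dotN n (x u : 'cV[R]_n) : (x^T *m (- u)) 0 0 = - (x^T *m u) 0 0.
Proof. by rewrite mulmxN mxE. Qed.

Lemma dotZ n (x u : 'cV[R]_n) a : (x^T *m (a *: u)) 0 0 = a * (x^T *m u) 0 0.
Proof. by rewrite -scalemxAr mxE. Qed.

Lemma enorm_ge0 n (x : 'cV[R]_n) : 0 <= enorm x.
Proof. exact: sqrtr_ge0. Qed.

Lemma enorm_sqr n (x : 'cV[R]_n) : enorm x ^+ 2 = (x^T *m x) 0 0.
Proof. by rewrite dot_self sqr_sqrtr // sumr_ge0 // => i _; apply: sqr_ge0. Qed.

Lemma enorm_eq0 n (x : 'cV[R]_n) : (enorm x == 0) = (x == 0).
Proof.
apply/idP/eqP => [|->]; last first.
  by rewrite /enorm big1 ?sqrtr0 // => i _; rewrite mxE expr0n.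
rewrite /enorm sqrtr_eq0 => sum_le0.
have sum_eq0 : \sum_(i < n) x i 0 ^+ 2 = 0.
  by apply/eqP; rewrite eq_le sum_le0 sumr_ge0 // => i _; apply: sqr_ge0.
have x2_eq0 := psumr_eq0P (fun i _ => sqr_ge0 (x i 0)) sum_eq0.
by apply/matrixP => i j; rewrite ord1 mxE; apply/eqP; rewrite -sqrf_eq0 x2_eq0.
Qed.

(* The switching direction sgn(x) = x / |x| has inner product |x| with x;
   this is what makes the switching term -rho sgn(s) dissipate rho |s|. *)
Lemma dotZ_sgnv n (x : 'cV[R]_n) a : (x^T *m (a *: sgnv x)) 0 0 = a * enorm x.
Proof.
rewrite /sgnv !dotZ -enorm_sqr; congr (a * _).
have [->|x_neq0] := eqVneq (enorm x) 0; first by rewrite expr0n mulr0.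
by rewrite expr2 mulKf.
Qed.

(* Lagrange's form of the Cauchy-Schwarz inequality, from
   2 (x_i y_i) (x_j y_j) <= x_i^2 y_j^2 + x_j^2 y_i^2. *)
Lemma dot_sqr_le n (x y : 'cV[R]_n) :
  (x^T *m y) 0 0 ^+ 2 <= (x^T *m x) 0 0 * (y^T *m y) 0 0.
Proof.
rewrite !dotE expr2 !big_distrlr /=.
have pair_le i j : 2%:R * (x i 0 * y i 0 * (x j 0 * y j 0))
    <= x i 0 * x i 0 * (y j 0 * y j 0) + x j 0 * x j 0 * (y i 0 * y i 0).
  by have := sqr_ge0 (x i 0 * y j 0 - x j 0 * y i 0); nra.
have swap : \sum_i \sum_j x j 0 * x j 0 * (y i 0 * y i 0)
    = \sum_i \sum_j x i 0 * x i 0 * (y j 0 * y j 0) :> R.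
  exact: exchange_big.
have two_le : 2%:R * \sum_i \sum_j x i 0 * y i 0 * (x j 0 * y j 0)
    <= \sum_i \sum_j x i 0 * x i 0 * (y j 0 * y j 0)
     + \sum_i \sum_j x j 0 * x j 0 * (y i 0 * y i 0) :> R.
  rewrite mulr_sumr -big_split; apply: ler_sum => i _.
  by rewrite mulr_sumr -big_split; apply: ler_sum => j _; apply: pair_le.
by rewrite swap in two_le; lra.
Qed.

Lemma dot_le_enorm n (x y : 'cV[R]_n) : (x^T *m y) 0 0 <= enorm x * enorm y.
Proof.
apply: le_trans (ler_norm _) _.
rewrite -sqrtr_sqr /enorm -sqrtrM; last by apply: sumr_ge0 => i _; apply: sqr_ge0.
rewrite ler_sqrt; last by rewrite mulr_ge0 // sumr_ge0 // => i _; apply: sqr_ge0.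
by rewrite -!dot_self dot_sqr_le.
Qed.

End EuclideanGeometry.

Section QuadraticForms.
Variable R : realType.
Local Open Scope classical_set_scope.

Lemma qform_scale n (x : 'cV[R]_n) (A : 'M[R]_n) a :
  ((a *: x)^T *m A *m (a *: x)) 0 0 = a ^+ 2 * (x^T *m A *m x) 0 0.
Proof. by rewrite !linearZ /= -!scalemxAl scalerA mxE expr2. Qed.

Lemma qform_continuous n (A : 'M[R]_n) :
  continuous (fun v : 'rV[R]_n => (v *m A *m v^T) 0 0).
Proof.
move=> v.
have -> : (fun w : 'rV[R]_n => (w *m A *m w^T) 0 0) =
    \sum_j \sum_i (fun w : 'rV[R]_n => w 0 i * A i j * w 0 j).
  apply/funext => w; rewrite fct_sumE mxE; apply: eq_bigr => j _.
  by rewrite fct_sumE !mxE big_distrl /=; apply: eq_bigr => i _.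
apply: (big_ind (fun f => {for v, continuous f})) => [|f g|j _].
- exact: cst_continuous.
- exact: continuousD.
apply: (big_ind (fun f => {for v, continuous f})) => [|f g|i _].
- exact: cst_continuous.
- exact: continuousD.
apply: continuousM; last exact: coord_continuous.
by apply: continuousM; [exact: coord_continuous | exact: cst_continuous].
Qed.

Lemma unit_sphere_compact n :
  compact [set v : 'rV[R]_n | (v *m v^T) 0 0 = 1].
Proof.
apply: bounded_closed_compact.
  exists 1; split => // M M1 v /= v1.
  apply: le_trans (ltW M1).
  rewrite (_ : `|v| = mx_norm v) //.
  have [->|/mx_norm_neq0 [[i j] ->]] := eqVneq (mx_norm v) 0; first exact: ler01.
  rewrite /= ord1 -(ler_pXn2r (_ : 0 < 2)%N) ?nnegrE ?ler01 // real_normK ?num_real //.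
  rewrite expr1n -v1 mxE (bigD1 j) //= !mxE -expr2 lerDl.
  by apply: sumr_ge0 => k _; rewrite mxE -expr2 sqr_ge0.
have -> : [set v : 'rV[R]_n | (v *m v^T) 0 0 = 1] =
    (fun v : 'rV[R]_n => (v *m 1%:M *m v^T) 0 0) @^-1` [set 1].
  by apply/seteqP; split => v /=; rewrite mulmx1.
apply: preimage_closed; last exact: closed_eq.
by move=> v _; apply: qform_continuous.
Qed.

(* A quadratic form that is positive away from the origin is coercive:
   it dominates a positive multiple of the squared Euclidean norm.  The
   constant is its minimum over the (compact) unit sphere. *)
Lemma qform_coercive n (A : 'M[R]_n) :
  (forall x : 'cV[R]_n, x != 0 -> 0 < (x^T *m A *m x) 0 0) ->
  exists2 k, 0 < k & forall x : 'cV[R]_n, k * (x^T *m x) 0 0 <= (x^T *m A *m x) 0 0.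
Proof.
move=> A_pos.
pose S := [set v : 'rV[R]_n | (v *m v^T) 0 0 = 1].
pose normalize (x : 'cV[R]_n) := (enorm x)^-1 *: x.
have normalizeS x : x != 0 -> S (normalize x)^T.
  move=> x_neq0; rewrite /S /= trmxK -(mulmx1 (_^T)) qform_scale mulmx1 -enorm_sqr.
  by rewrite exprVn mulVf // sqrf_eq0 enorm_eq0.
have [[x0 x0_neq0]|all_zero] := pselect (exists x : 'cV[R]_n, x != 0); last first.
  exists 1 => // x; have -> : x = 0 by apply/eqP; apply: contra_notT all_zero => x_neq0; exists x.
  by rewrite !mulmx0 mxE mul1r.
have S_neq0 : S !=set0 by exists (normalize x0)^T; apply: normalizeS.
have q_cont := @qform_continuous n A.
have [c cS c_min] := EVT_min_rV S_neq0 (@unit_sphere_compact n)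
  (continuous_subspaceT q_cont).
have Sc : S c by rewrite inE in cS.
have c_neq0 : c^T != 0.
  apply: contra_eq_neq Sc => /(congr1 trmx); rewrite trmxK trmx0 => ->.
  by rewrite mul0mx mxE eq_sym oner_neq0.
exists ((c *m A *m c^T) 0 0); first by rewrite -[X in X *m A]trmxK; apply: A_pos.
move=> x; have [->|x_neq0] := eqVneq x 0; first by rewrite !mulmx0 !mxE mulr0.
have e_gt0 : 0 < enorm x by rewrite lt_def enorm_eq0 x_neq0 enorm_ge0.
have := c_min (normalize x)^T (mem_set (normalizeS x x_neq0)).
rewrite trmxK qform_scale exprVn => min_le.
by rewrite -enorm_sqr -ler_pdivlMr ?exprn_gt0 // mulrC.
Qed.

Lemma posdef_coercive (A : 'M[R]_3) : posdef A ->
  exists2 k, 0 < k & forall x : 'cV[R]_3, k * (x^T *m x) 0 0 <= (x^T *m A *m x) 0 0.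
Proof. by move=> [_ A_pos]; apply: qform_coercive. Qed.

End QuadraticForms.

Section Derivatives.
Variable R : realType.
Implicit Types (t : R).

Lemma bilinE n (x y : 'cV[R]_n) (M : 'M[R]_n) :
  (x^T *m M *m y) 0 0 = \sum_j \sum_i x i 0 * M i j * y j 0.
Proof.
rewrite mxE; apply: eq_bigr => j _; rewrite mxE big_distrl /=.
by apply: eq_bigr => i _; rewrite mxE.
Qed.

Lemma bilin_trmx n (x y : 'cV[R]_n) (M : 'M[R]_n) :
  (x^T *m M *m y) 0 0 = (y^T *m M^T *m x) 0 0.
Proof.
have -> : (x^T *m M *m y) 0 0 = ((x^T *m M *m y)^T) 0 0 by rewrite [RHS]mxE.
by rewrite !trmx_mul trmxK mulmxA.
Qed.

Lemma is_derive_entry m n (M : R -> 'M[R]_(m, n)) t i j :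
  derivable M t 1 -> is_derive t 1 (fun s => M s i j) (derive1 M t i j).
Proof.
move=> dM; apply: DeriveDef; first exact: (derivable_mxP M t 1).1 dM i j.
by rewrite derive1E derive_mx // mxE.
Qed.

Lemma is_derive_bilin n (x y : R -> 'cV[R]_n) (M : R -> 'M[R]_n) t :
  derivable x t 1 -> derivable M t 1 -> derivable y t 1 ->
  is_derive t 1 (fun s => ((x s)^T *m M s *m y s) 0 0)
   (((derive1 x t)^T *m M t *m y t) 0 0 + ((x t)^T *m derive1 M t *m y t) 0 0
    + ((x t)^T *m M t *m derive1 y t) 0 0).
Proof.
move=> dx dM dy.
have -> : (fun s => ((x s)^T *m M s *m y s) 0 0) = \sum_j \sum_i
    ((fun s => x s i 0) * (fun s => M s i j) * (fun s => y s j 0)).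
  by apply/funext => s; rewrite bilinE fct_sumE; apply: eq_bigr => j _; rewrite fct_sumE.
apply: is_derive_eq.
  apply: is_derive_sum => j; apply: is_derive_sum => i.
  by apply: is_deriveM; first apply: is_deriveM; apply: is_derive_entry.
rewrite !bilinE -!big_split /=; apply: eq_bigr => j _.
rewrite -!big_split /=; apply: eq_bigr => i _.
have -> : ((fun s => x s i 0) * (fun s => M s i j)) t = x t i 0 * M t i j by [].
by rewrite /GRing.scale /=; ring.
Qed.

Lemma is_derive_add (f g : R -> R) t a b :
  is_derive t 1 f a -> is_derive t 1 g b -> is_derive t 1 (fun s => f s + g s) (a + b).
Proof. exact: is_deriveD. Qed.

Lemma is_derive_half_sqr_err (f : R -> R) a t : derivable f t 1 ->
  is_derive t 1 (fun s => 2%:R^-1 * (f s - a) ^+ 2) ((f t - a) * derive1 f t).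
Proof.
move=> df.
have -> : (fun s => 2%:R^-1 * (f s - a) ^+ 2) = 2%:R^-1 \*: (f - cst a) ^+ 2.
  by apply/funext => s; rewrite /= expr2.
apply: is_derive_eq; first by apply/is_deriveZ/is_deriveX/is_deriveB; exact: derivableP.
by rewrite derive1E subr0 /GRing.scale /= expr1 mulrA mulrA mulVf ?mul1r // pnatr_eq0.
Qed.

Lemma is_derive_half_sum_sqr_err n (K : 'I_n -> R -> R) (Ks : 'I_n -> R) t :
  (forall i, derivable (K i) t 1) ->
  is_derive t 1 (fun s => 2%:R^-1 * \sum_i (K i s - Ks i) ^+ 2)
    (\sum_i (K i t - Ks i) * derive1 (K i) t).
Proof.
move=> dK.
have -> : (fun s => 2%:R^-1 * \sum_i (K i s - Ks i) ^+ 2) =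
    \sum_i (fun s => 2%:R^-1 * (K i s - Ks i) ^+ 2).
  by apply/funext => s; rewrite fct_sumE mulr_sumr.
by apply: is_derive_sum => i; apply: is_derive_half_sqr_err.
Qed.

Lemma is_derive_half_energy n (s : R -> 'cV[R]_n) (M : R -> 'M[R]_n) t :
  derivable s t 1 -> derivable M t 1 -> (M t)^T = M t ->
  is_derive t 1 (fun u => 2%:R^-1 * ((s u)^T *m M u *m s u) 0 0)
    (((s t)^T *m M t *m derive1 s t) 0 0
     + 2%:R^-1 * ((s t)^T *m derive1 M t *m s t) 0 0).
Proof.
move=> ds dM M_sym.
apply: is_derive_eq; first exact/is_deriveZ/is_derive_bilin.
by rewrite [X in X + _ + _]bilin_trmx M_sym /GRing.scale /=; field.
Qed.

Lemma is_derive_half_mass_energy n (m : R) (s : R -> 'cV[R]_n) t :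
  derivable s t 1 ->
  is_derive t 1 (fun u => 2%:R^-1 * (m * ((s u)^T *m s u) 0 0))
    (m * ((s t)^T *m derive1 s t) 0 0).
Proof.
move=> ds.
have mE (u v : 'cV[R]_n) : m * (u^T *m v) 0 0 = (u^T *m m%:M *m v) 0 0.
  by rewrite mul_mx_scalar -scalemxAl [RHS]mxE.
have -> : (fun u => 2%:R^-1 * (m * ((s u)^T *m s u) 0 0)) =
    (fun u => 2%:R^-1 * ((s u)^T *m cst m%:M u *m s u) 0 0).
  by apply/funext => u; rewrite mE.
apply: is_derive_eq.
  by apply: is_derive_half_energy => //; exact: tr_scalar_mx.
by rewrite derive1_cst mulmx0 mul0mx [X in _ * X]mxE mulr0 addr0 mE.
Qed.

End Derivatives.

Section Comparison.
Variable R : realType.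
Local Open Scope classical_set_scope.

Lemma last_time_below (V : R -> R) (M t : R) : 0 <= t ->
  (forall s, 0 <= s -> {for s, continuous V}) -> V 0 <= M ->
  exists s0, [/\ 0 <= s0 <= t, V s0 <= M & forall s, s0 < s <= t -> M < V s].
Proof.
move=> t_ge0 V_cont V0_le.
pose S := [set s | 0 <= s <= t /\ V s <= M].
have S0 : S 0 by split => //; rewrite lexx t_ge0.
have S_sup : has_sup S by split; [exists 0 | exists t => s [/andP[_ ->]]].
pose s0 := sup S.
have s0_ge0 : 0 <= s0 by apply: sup_upper_bound.
have s0_le : s0 <= t by apply: ge_sup => //; [exists 0 | move=> s [/andP[_ ->]]].
exists s0; split; first by rewrite s0_ge0 s0_le.
- rewrite leNgt; apply/negP => M_lt.
  have e_gt0 : 0 < V s0 - M by rewrite subr_gt0.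
  have := cvgr_dist_lt _ _ (V_cont _ s0_ge0) _ e_gt0.
  move=> /(_ (nbhs_filter _)) /nbhs_ballP [e /= e_gt0' near_s0].
  have [x Sx x_gt] := sup_adherent e_gt0' S_sup.
  have x_le : x <= s0 by apply: sup_upper_bound.
  have [_ Vx_le] := Sx.
  have /near_s0 /= : ball s0 e x.
    by rewrite /ball /= ger0_norm ?subr_ge0 // ltrBlDl -ltrBlDr.
  by have := ler_norm (V s0 - V x); lra.
- move=> s /andP[s0_lt s_le]; rewrite ltNge; apply/negP => Vs_le.
  have : s <= s0.
    by apply: sup_upper_bound => //; split => //; rewrite s_le (le_trans s0_ge0 (ltW s0_lt)).
  by rewrite leNgt s0_lt.
Qed.

Lemma sublevel_invariant (V : R -> R) (B : R) :
  (forall t, 0 <= t -> derivable V t 1) ->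
  (forall t, 0 <= t -> B < V t -> derive1 V t <= 0) ->
  forall t, 0 <= t -> V t <= Num.max (V 0) B.
Proof.
move=> V_der V_dec t t_ge0; rewrite leNgt; apply/negP => V_gt.
set M := Num.max (V 0) B in V_gt.
have V0_le : V 0 <= M by rewrite le_max lexx.
have B_le : B <= M by rewrite le_max lexx orbT.
have V_cont s : 0 <= s -> {for s, continuous V}.
  by move=> s_ge0; apply/differentiable_continuous/derivable1_diffP/V_der.
have [s0 [/andP[s0_ge0 s0_le] Vs0_le above]] :=
  last_time_below t_ge0 V_cont V0_le.
have s0_lt : s0 < t.
  by rewrite lt_neqAle s0_le andbT; apply/eqP => s0_eq; move: V_gt; rewrite -s0_eq; lra.
have : V t <= V s0.
  apply: (@ler0_derive1_le_cc _ V s0 t).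
  - move=> s; rewrite in_itv /= => /andP[s0_lt_s s_lt].
    by apply: V_der; rewrite (le_trans s0_ge0 (ltW s0_lt_s)).
  - move=> s; rewrite in_itv /= => /andP[s0_lt_s s_lt].
    apply: V_dec; first by rewrite (le_trans s0_ge0 (ltW s0_lt_s)).
    apply: le_lt_trans B_le (above _ _).
    by rewrite s0_lt_s (ltW s_lt).
  - apply: derivable_within_continuous => s; rewrite in_itv /= => /andP[s0_le_s _].
    by apply: V_der; rewrite (le_trans s0_ge0 s0_le_s).
  - by rewrite in_itv /= lexx (ltW s0_lt).
  - by rewrite in_itv /= lexx (ltW s0_lt).
  - exact: ltW.
by move: V_gt Vs0_le; lra.
Qed.

Lemma ultimate_bound (V : R -> R) (c d : R) : 0 < c ->
  (forall t : R, 0 <= t -> exists2 D : R, is_derive t (1 : R) V D & D <= - c * V t + d) ->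
  forall t, 0 <= t -> V t <= Num.max (V 0) (d / c).
Proof.
move=> c_gt0 V_diss.
apply: sublevel_invariant => t t_ge0; have [D V_der D_le] := V_diss t t_ge0.
  by case: V_der.
move=> V_gt; rewrite derive1E derive_val; apply: le_trans D_le _.
by move: V_gt; rewrite ltr_pdivrMr // mulrC; lra.
Qed.

End Comparison.

Section LyapunovEstimates.
Variable R : realType.

Lemma horner2 (a : 'I_2 -> R) x : \sum_(i < 2) a i * x ^+ i = a 0 + a 1 * x.
Proof.
rewrite !big_ord_recl big_ord0 addr0 expr0 mulr1.
by rewrite (_ : lift ord0 ord0 = 1) //; apply: val_inj.
Qed.

Lemma horner3 (a : 'I_3 -> R) x :
  \sum_(i < 3) a i * x ^+ i = a 0 + a 1 * x + a 2%:R * x ^+ 2.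
Proof.
rewrite !big_ord_recl big_ord0 addr0 expr0 mulr1 addrA.
have l1 : lift ord0 ord0 = 1 :> 'I_3 by apply: val_inj.
have l2 : lift ord0 (lift ord0 ord0) = 2%:R :> 'I_3 by apply: val_inj.
by rewrite [in a (lift _ (lift _ _))]l2 [in a (lift _ _)]l1 expr1.
Qed.

(* The leakage term -al K of an adaptive law, paired with the estimation
   error K - Ks, dissipates the error up to a constant. *)
Lemma leakage_bound (al c K Ks : R) : 0 <= c -> c <= al ->
  (K - Ks) * (- (al * K)) <= - c * (2%:R^-1 * (K - Ks) ^+ 2) + 2%:R^-1 * (al * Ks ^+ 2).
Proof.
move=> c_ge0 c_le.
have -> : (K - Ks) * (- (al * K)) = - al * (2%:R^-1 * (K - Ks) ^+ 2)
    - 2%:R^-1 * (al * K ^+ 2) + 2%:R^-1 * (al * Ks ^+ 2) by field.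
have : c * (2%:R^-1 * (K - Ks) ^+ 2) <= al * (2%:R^-1 * (K - Ks) ^+ 2).
  by rewrite ler_wpM2r // mulr_ge0 ?sqr_ge0 // invr_ge0 ler0n.
have : 0 <= 2%:R^-1 * (al * K ^+ 2).
  by rewrite mulr_ge0 ?invr_ge0 ?ler0n // mulr_ge0 ?sqr_ge0 // (le_trans c_ge0 c_le).
lra.
Qed.

(* Core estimate of the adaptive sliding-mode law: the switching gain
   rho = sum_i K_i x^i, driven by |s| x^i with leakage al_i, dominates the
   uncertainty phi (bounded by sum_i Ks_i x^i) once K_i has converged, and
   otherwise the gain errors dissipate at rate c. *)
Lemma adaptive_switching_bound N n (s phi : 'cV[R]_n) (x c : R)
    (K Ks al : 'I_N -> R) :
  0 <= c -> (forall i, c <= al i) -> enorm phi <= \sum_i Ks i * x ^+ i ->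
  (s^T *m phi) 0 0 - (\sum_i K i * x ^+ i) * enorm s
    + \sum_i (K i - Ks i) * (enorm s * x ^+ i - al i * K i)
  <= - c * (2%:R^-1 * \sum_i (K i - Ks i) ^+ 2) + 2%:R^-1 * \sum_i al i * Ks i ^+ 2.
Proof.
move=> c_ge0 c_le phi_le.
have -> : \sum_i (K i - Ks i) * (enorm s * x ^+ i - al i * K i)
    = enorm s * \sum_i K i * x ^+ i - enorm s * \sum_i Ks i * x ^+ i
      + \sum_i (K i - Ks i) * (- (al i * K i)).
  by rewrite !mulr_sumr -!sumrB -big_split /=; apply: eq_bigr => i _; ring.
have robust : (s^T *m phi) 0 0 <= enorm s * \sum_i Ks i * x ^+ i.
  by apply: le_trans (dot_le_enorm s phi) _; rewrite ler_wpM2l ?enorm_ge0.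
have leak : \sum_i (K i - Ks i) * (- (al i * K i))
    <= - c * (2%:R^-1 * \sum_i (K i - Ks i) ^+ 2) + 2%:R^-1 * \sum_i al i * Ks i ^+ 2.
  by rewrite !mulr_sumr -big_split; apply: ler_sum => i _; apply: leakage_bound.
lra.
Qed.

(* Lyapunov estimate for the position loop: the gravity compensation
   mh g of the control law and the update of the mass estimate mh cancel
   each other in dV/dt. *)
Lemma position_dissipation N n (m c lp alm x mh mhd : R) (Lp : 'M[R]_n)
    (alp Kps K Kd : 'I_N -> R) (s sd phi G : 'cV[R]_n) :
  0 <= c -> c * m <= 2%:R * lp -> (forall i, c <= alp i) -> c <= alm ->
  lp * (s^T *m s) 0 0 <= (s^T *m Lp *m s) 0 0 ->
  enorm phi <= \sum_i Kps i * x ^+ i ->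
  m *: sd = (- (Lp *m s) - (\sum_i K i * x ^+ i) *: sgnv s + mh *: G)
            + phi - m *: G ->
  (forall i, Kd i = enorm s * x ^+ i - alp i * K i) ->
  mhd = - (s^T *m G) 0 0 - alm * mh ->
  m * (s^T *m sd) 0 0 + \sum_i (K i - Kps i) * Kd i + (mh - m) * mhd
  <= - c * (2%:R^-1 * (m * (s^T *m s) 0 0) + 2%:R^-1 * \sum_i (K i - Kps i) ^+ 2
            + 2%:R^-1 * (mh - m) ^+ 2)
     + 2%:R^-1 * (\sum_i alp i * Kps i ^+ 2 + alm * m ^+ 2).
Proof.
move=> c_ge0 cm_le c_alp c_alm Lp_coer phi_le s_dyn Kd_eq ->.
have -> : m * (s^T *m sd) 0 0 = - (s^T *m Lp *m s) 0 0
    - (\sum_i K i * x ^+ i) * enorm s + mh * (s^T *m G) 0 0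
    + (s^T *m phi) 0 0 - m * (s^T *m G) 0 0.
  by rewrite -dotZ s_dyn !(dotD, dotN) dotZ_sgnv !dotZ mulmxA.
rewrite (eq_bigr _ (fun i _ => congr1 _ (Kd_eq i))).
have core := adaptive_switching_bound s K c_ge0 c_alp phi_le.
have leak := leakage_bound mh m c_ge0 c_alm.
have := ler_wpM2r (dot_ge0 s) cm_le.
lra.
Qed.

(* Lyapunov estimate for the attitude loop: the skew-symmetry of
   dJ/dt - 2 C cancels the Coriolis term. *)
Lemma attitude_dissipation N n (jbar c lq x : R) (Lq J Jd C : 'M[R]_n)
    (alq Kqs K Kd : 'I_N -> R) (s sd phi : 'cV[R]_n) :
  0 <= c -> c * jbar <= 2%:R * lq -> (forall i, c <= alq i) ->
  lq * (s^T *m s) 0 0 <= (s^T *m Lq *m s) 0 0 ->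
  (s^T *m J *m s) 0 0 <= jbar * (s^T *m s) 0 0 ->
  s^T *m (Jd - 2%:R *: C) *m s = 0 ->
  enorm phi <= \sum_i Kqs i * x ^+ i ->
  J *m sd = (- (Lq *m s) - (\sum_i K i * x ^+ i) *: sgnv s) - C *m s + phi ->
  (forall i, Kd i = enorm s * x ^+ i - alq i * K i) ->
  (s^T *m J *m sd) 0 0 + 2%:R^-1 * (s^T *m Jd *m s) 0 0
    + \sum_i (K i - Kqs i) * Kd i
  <= - c * (2%:R^-1 * (s^T *m J *m s) 0 0 + 2%:R^-1 * \sum_i (K i - Kqs i) ^+ 2)
     + 2%:R^-1 * \sum_i alq i * Kqs i ^+ 2.
Proof.
move=> c_ge0 cj_le c_alq Lq_coer J_le skew phi_le s_dyn Kd_eq.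
have -> : (s^T *m Jd *m s) 0 0 = 2%:R * (s^T *m C *m s) 0 0.
  apply/eqP; rewrite -subr_eq0; apply/eqP.
  by move: skew => /(congr1 (fun M : 'M[R]_1 => M 0 0));
    rewrite mulmxBr mulmxBl -scalemxAr -scalemxAl !mxE.
have -> : (s^T *m J *m sd) 0 0 = - (s^T *m Lq *m s) 0 0
    - (\sum_i K i * x ^+ i) * enorm s - (s^T *m C *m s) 0 0 + (s^T *m phi) 0 0.
  by rewrite -mulmxA s_dyn !(dotD, dotN) dotZ_sgnv !mulmxA.
rewrite (eq_bigr _ (fun i _ => congr1 _ (Kd_eq i))).
have core := adaptive_switching_bound s K c_ge0 c_alq phi_le.
have := ler_wpM2l c_ge0 J_le.
have := ler_wpM2r (dot_ge0 s) cj_le.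
lra.
Qed.

End LyapunovEstimates.

Section DesignConstants.
Variable R : realType.

Lemma positive_lower_bound (I : finType) (a : I -> R) :
  (forall i, 0 < a i) -> exists2 c, 0 < c & forall i, c <= a i.
Proof.
move=> a_gt0; exists (\big[Num.min/1]_i a i); last by move=> i; apply: bigmin_le.
by apply: (big_ind (fun x => 0 < x)) => // x y; rewrite lt_min => -> ->.
Qed.

Lemma weighted_sqr_sum_ge0 (I : finType) (a b : I -> R) :
  (forall i, 0 < a i) -> 0 <= \sum_i a i * b i ^+ 2.
Proof. by move=> a_gt0; apply: sumr_ge0 => i _; rewrite mulr_ge0 ?sqr_ge0 ?ltW. Qed.

Lemma decay_rate_exists (I J : finType) (m jbar lp lq alm : R)
    (alp : I -> R) (alq : J -> R) :
  0 < m -> 0 < jbar -> 0 < lp -> 0 < lq ->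
  (forall i, 0 < alp i) -> 0 < alm -> (forall i, 0 < alq i) ->
  exists2 c, 0 < c & [/\ c * m <= 2%:R * lp, c * jbar <= 2%:R * lq,
    forall i, c <= alp i, c <= alm & forall i, c <= alq i].
Proof.
move=> m_gt0 jbar_gt0 lp_gt0 lq_gt0 alp_gt0 alm_gt0 alq_gt0.
have [cp cp_gt0 cp_le] := positive_lower_bound alp_gt0.
have [cq cq_gt0 cq_le] := positive_lower_bound alq_gt0.
exists (Num.min (Num.min (2%:R * lp / m) (2%:R * lq / jbar)) (Num.min alm (Num.min cp cq))).
  by rewrite !lt_min alm_gt0 cp_gt0 cq_gt0 !divr_gt0 ?mulr_gt0 ?ltr0n.
split.
- by rewrite -ler_pdivlMr // !ge_min lexx.
- by rewrite -ler_pdivlMr // !ge_min lexx orbT.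
- by move=> i; apply: le_trans (cp_le i); rewrite !ge_min lexx !orbT.
- by rewrite !ge_min lexx !orbT.
- by move=> i; apply: le_trans (cq_le i); rewrite !ge_min lexx !orbT.
Qed.

End DesignConstants.

Unset Implicit Arguments. Set Strict Implicit.

Theorem mainTheorem1 (R : realType)
  (* unknown mass, upper inertia bound and uncertainty constants *)
  (m jbar : R) (Kps : 'I_2 -> R) (Kqs : 'I_3 -> R)
  (* design parameters *)
  (Lp Lq : 'M[R]_3) (alp : 'I_2 -> R) (alm : R) (alq : 'I_3 -> R) :
  0 < m -> 0 < jbar ->
  (forall i, 0 <= Kps i) -> (forall i, 0 <= Kqs i) ->
  posdef Lp -> posdef Lq ->
  (forall i, 0 < alp i) -> 0 < alm -> (forall i, 0 < alq i) ->
  exists B : R, 0 <= B /\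
  forall (g jlow : R) (Phip Phiq : 'M[R]_3)
    (J Cq : R -> 'M[R]_3)
    (ep eqe phip phiq : R -> 'cV[R]_3)
    (mh : R -> R) (Kp : 'I_2 -> R -> R) (Kq : 'I_3 -> R -> R),
    0 < g -> 0 < jlow -> jlow <= jbar ->
    posdef Phip -> posdef Phiq ->
    (* inertia matrix: symmetric, C^1, bounded *)
    (forall t, 0 <= t -> (J t)^T = J t) ->
    (forall t, 0 <= t -> derivable J t 1) ->
    (forall t, 0 <= t -> {for t, continuous (derive1 J)}) ->
    (forall t, 0 <= t -> forall r : 'cV[R]_3,
        jlow * (r^T *m r) 0 0 <= (r^T *m J t *m r) 0 0 /\
        (r^T *m J t *m r) 0 0 <= jbar * (r^T *m r) 0 0) ->
    (* skew-symmetry property *)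
    (forall t, 0 <= t -> forall r : 'cV[R]_3,
        r^T *m (derive1 J t - 2%:R *: Cq t) *m r = 0) ->
    (* bounds on lumped uncertainties *)
    (forall t, 0 <= t ->
       enorm (phip t) <= Kps 0 + Kps 1 * enorm (xiv ep t)) ->
    (forall t, 0 <= t ->
       enorm (phiq t) <= Kqs 0 + Kqs 1 * enorm (xiv eqe t)
                          + Kqs 2%:R * enorm (xiv eqe t) ^+ 2) ->
    (* regularity of the trajectories *)
    (forall t, 0 <= t -> derivable ep t 1) ->
    (forall t, 0 <= t -> derivable eqe t 1) ->
    (forall t, 0 <= t -> derivable (slide Phip ep) t 1) ->
    (forall t, 0 <= t -> derivable (slide Phiq eqe) t 1) ->
    (forall t, 0 <= t -> derivable mh t 1) ->
    (forall i t, 0 <= t -> derivable (Kp i) t 1) ->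
    (forall i t, 0 <= t -> derivable (Kq i) t 1) ->
    (* closed-loop sliding dynamics with the control laws *)
    (forall t, 0 <= t ->
       m *: derive1 (slide Phip ep) t =
         (- (Lp *m slide Phip ep t)
          - (\sum_(i < 2) Kp i t * enorm (xiv ep t) ^+ i) *: sgnv (slide Phip ep t)
          + mh t *: gvec g)
         + phip t - m *: gvec g) ->
    (forall t, 0 <= t ->
       J t *m derive1 (slide Phiq eqe) t =
         (- (Lq *m slide Phiq eqe t)
          - (\sum_(i < 3) Kq i t * enorm (xiv eqe t) ^+ i) *: sgnv (slide Phiq eqe t))
         - Cq t *m slide Phiq eqe t + phiq t) ->
    (* adaptive laws *)
    (forall i t, 0 <= t ->
       derive1 (Kp i) t = enorm (slide Phip ep t) * enorm (xiv ep t) ^+ i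
                      - alp i * Kp i t) ->
    (forall t, 0 <= t ->
       derive1 mh t = - ((slide Phip ep t)^T *m gvec g) 0 0 - alm * mh t) ->
    (forall i t, 0 <= t ->
       derive1 (Kq i) t = enorm (slide Phiq eqe t) * enorm (xiv eqe t) ^+ i
                      - alq i * Kq i t) ->
    (forall i, 0 < Kp i 0) -> 0 < mh 0 -> (forall i, 0 < Kq i 0) ->
    let V := fun t =>
      2%:R^-1 * (m * ((slide Phip ep t)^T *m slide Phip ep t) 0 0)
      + 2%:R^-1 * (\sum_(i < 2) (Kp i t - Kps i) ^+ 2)
      + 2%:R^-1 * (mh t - m) ^+ 2
      + 2%:R^-1 * ((slide Phiq eqe t)^T *m J t *m slide Phiq eqe t) 0 0
      + 2%:R^-1 * (\sum_(i < 3) (Kq i t - Kqs i) ^+ 2) in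
    forall t, 0 <= t -> V t <= Num.max (V 0) B.
Proof.
move=> m_gt0 jbar_gt0 _ _ Lp_pd Lq_pd alp_gt0 alm_gt0 alq_gt0.
have [lp lp_gt0 Lp_coer] := posdef_coercive Lp_pd.
have [lq lq_gt0 Lq_coer] := posdef_coercive Lq_pd.
have [c c_gt0 [cm_le cj_le c_alp c_alm c_alq]] :=
  decay_rate_exists m_gt0 jbar_gt0 lp_gt0 lq_gt0 alp_gt0 alm_gt0 alq_gt0.
pose d := 2%:R^-1 * (\sum_i alp i * Kps i ^+ 2 + alm * m ^+ 2)
          + 2%:R^-1 * \sum_i alq i * Kqs i ^+ 2.
have d_ge0 : 0 <= d.
  by rewrite addr_ge0 ?mulr_ge0 ?invr_ge0 ?ler0n ?addr_ge0 ?weighted_sqr_sum_ge0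
    ?mulr_ge0 ?sqr_ge0 ?ltW.
exists (d / c); split; first by rewrite divr_ge0 // ltW.
move=> g jlow Phip Phiq J Cq ep eqe phip phiq mh Kp Kq _ _ _ _ _ J_sym J_der _ J_bnd
  skew phip_bnd phiq_bnd _ _ sp_der sq_der mh_der Kp_der Kq_der sp_dyn sq_dyn
  Kp_law mh_law Kq_law _ _ _ V.
apply: ultimate_bound => // t t_ge0.
eexists.
  rewrite /V.
  eapply is_derive_add; [eapply is_derive_add; [eapply is_derive_add;
    [eapply is_derive_add|]|]|].
  - exact: is_derive_half_mass_energy (sp_der t t_ge0).
  - exact: is_derive_half_sum_sqr_err (fun i => Kp_der i t t_ge0).
  - exact: is_derive_half_sqr_err (mh_der t t_ge0).
  - exact: is_derive_half_energy (sq_der t t_ge0) (J_der t t_ge0) (J_sym t t_ge0).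
  - exact: is_derive_half_sum_sqr_err (fun i => Kq_der i t t_ge0).
have c_ge0 := ltW c_gt0.
have phip_le : enorm (phip t) <= \sum_i Kps i * enorm (xiv ep t) ^+ i.
  by rewrite horner2; apply: phip_bnd.
have phiq_le : enorm (phiq t) <= \sum_i Kqs i * enorm (xiv eqe t) ^+ i.
  by rewrite horner3; apply: phiq_bnd.
have := position_dissipation c_ge0 cm_le c_alp c_alm (Lp_coer _)
  phip_le (sp_dyn t t_ge0) (fun i => Kp_law i t t_ge0) (mh_law t t_ge0).
have := attitude_dissipation c_ge0 cj_le c_alq (Lq_coer _) (J_bnd t t_ge0 _).2
  (skew t t_ge0 _) phiq_le (sq_dyn t t_ge0) (fun i => Kq_law i t t_ge0).
rewrite /V /d; lra.
Qed.
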